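(* Let $K\geq 4$ and let $H$ be a signed bipartite graph. If a signed bipartite graph $G$ whose $+$ class has size $m$ and $-$ class has size $n$ has at least $K\cdot z(m, n,H)$ edges, then $G$ contains at least $\left(\frac{K}{2}\right)^{\mathrm{e}(H)} \cdot z(m,n,H)$ signed copies of $H$.
   Context: A signed bipartite graph is a bipartite graph with a proper vertex 2-colouring by $+$ and $-$. A signed copy of $H$ in $G$ is a copy of $H$ in $G$ with $+$ vertices mapped into the $+$ class and $-$ vertices into the $-$ class. $z(m,n,H)$ is the maximum number of edges in a signed bipartite graph with $+$ class of size $m$ and $-$ class of size $n$ containing no signed copy of $H$. *)

From mathcomp Require Import all_boot all_order all_algebra.
Set Implicit Arguments. Unset Strict Implicit. Unset Printing Implicit Defensive.

(* A signed bipartite graph with + class 'I_m and - class 'I_n is given by its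
   edge set E : {set 'I_m * 'I_n} (an edge (u,v) joins the + vertex u to the
   - vertex v). *)
Definition sgraph (m n : nat) := {set 'I_m * 'I_n}.

(* Distinct copies are distinct subgraphs. *)
Definition signed_copies (a b m n : nat) (H : sgraph a b) (G : sgraph m n)
  : {set ({set 'I_m} * {set 'I_n} * {set 'I_m * 'I_n})} :=
  [set X | [exists f : {ffun 'I_a -> 'I_m}, exists g : {ffun 'I_b -> 'I_n},
     [&& injectiveb f, injectiveb g,
         X == (f @: setT, g @: setT, [set (f p.1, g p.2) | p in H])
       & [set (f p.1, g p.2) | p in H] \subset G]]].

Definition has_signed_copy (a b m n : nat) (H : sgraph a b) (G : sgraph m n) : bool :=
  signed_copies H G != set0.

Definition zext (m n a b : nat) (H : sgraph a b) : nat :=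
  \max_(G : sgraph m n | ~~ has_signed_copy H G) #|G|.

From mathcomp Require Import all_boot all_order all_algebra.
From mathcomp Require Import zify lra.
Set Implicit Arguments. Unset Strict Implicit. Unset Printing Implicit Defensive.
Import Order.TTheory GRing.Theory Num.Theory.

(* Let z = z(m,n,H), h = e(H) and C(G) the set of signed copies of H in G.
   Removing an edge of a copy destroys that copy, so #C(G) >= #|G| - z.
   Double counting (edge, copy) incidences gives an edge x of G lying in at
   least h/#|G| of the copies; since #|G|^_h * (#|G| - h) = #|G| * (#|G|-1)^_h,
   deleting x does not increase #C(G) / #|G|^_h.  Deleting edges down to 2z
   edges, where at least z copies remain, yields
   #C(G) >= z * #|G|^_h / (2z)^_h, and each factor (#|G| - i) / (2z - i) of
   the last ratio is at least K/2 when #|G| >= Kz. *)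

Lemma subset_of_card (T : finType) (A : {set T}) k :
  k <= #|A| -> exists2 B : {set T}, B \subset A & #|B| = k.
Proof.
elim: k => [|k IHk] ltkA; first by exists set0; rewrite ?sub0set ?cards0.
have [B sBA cardB] := IHk (ltnW ltkA).
have /properP[_ [x xA xNB]] : B \proper A by rewrite properEcard sBA cardB.
by exists (x |: B); rewrite ?subUset ?sub1set ?xA // cardsU1 xNB cardB.
Qed.

Lemma sum_pred_card (T : finType) (A : {pred T}) (P : pred T) :
  \sum_(i in A) P i = #|[set i in A | P i]|.
Proof.
rewrite -sum1_card big_mkcond [RHS]big_mkcond /=.
by apply: eq_bigr => i _; rewrite inE; case: (i \in A); case: (P i).
Qed.

Section SignedCopies.

Variables (a b m n : nat) (H : sgraph a b).
Local Notation C G := (signed_copies H G).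
Local Notation z := (zext m n H).

Lemma in_signed_copies (G : sgraph m n) c :
  (c \in C G) = (c \in C setT) && (c.2 \subset G).
Proof.
apply/idP/andP => [|[]]; rewrite !inE.
  case/existsP=> f /existsP[g /and4P[injf injg /eqP-> sub]].
  split=> //; apply/existsP; exists f; apply/existsP; exists g.
  by rewrite injf injg eqxx subsetT.
case/existsP=> f /existsP[g /and4P[injf injg /eqP-> _]] sub.
by apply/existsP; exists f; apply/existsP; exists g; rewrite injf injg eqxx.
Qed.

Lemma signed_copy_sub (G : sgraph m n) c : c \in C G -> c.2 \subset G.
Proof. by rewrite in_signed_copies => /andP[]. Qed.

Lemma card_signed_copy (G : sgraph m n) c : c \in C G -> #|c.2| = #|H|.
Proof.
rewrite inE => /existsP[f /existsP[g]].
case/and4P=> /injectiveP injf /injectiveP injg /eqP-> _.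
by apply: card_imset => -[p1 p2] [q1 q2] /= [/injf-> /injg->].
Qed.

Definition copies_containing (G : sgraph m n) x := [set c in C G | x \in c.2].

Lemma in_copies_containing (G : sgraph m n) x c :
  (c \in copies_containing G x) = (c \in C G) && (x \in c.2).
Proof. by rewrite !inE. Qed.

Lemma signed_copies_setD1 (G : sgraph m n) x :
  C (G :\ x) = C G :\: copies_containing G x.
Proof.
apply/setP => c; rewrite in_setD in_copies_containing.
rewrite (in_signed_copies (G :\ x)) (in_signed_copies G) subsetD1.
by case: (c \in C setT) (c.2 \subset G) (x \in c.2) => [] [] [].
Qed.

Lemma card_copies_setD1 (G : sgraph m n) x :
  #|C (G :\ x)| + #|copies_containing G x| = #|C G|.
Proof.
rewrite signed_copies_setD1 addnC -(cardsID (copies_containing G x) (C G)).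
by rewrite (setIidPr _) // /copies_containing setIdE subsetIl.
Qed.

Lemma sum_card_copies_containing (G : sgraph m n) :
  \sum_(x in G) #|copies_containing G x| = #|H| * #|C G|.
Proof.
under eq_bigr do rewrite -sum_pred_card.
rewrite exchange_big mulnC -sum_nat_const; apply: eq_bigr => c copy_c.
rewrite sum_pred_card -(card_signed_copy copy_c); apply: eq_card => x.
by rewrite inE andb_idl // => /(subsetP (signed_copy_sub copy_c)).
Qed.

Lemma exists_edge_in_many_copies (G : sgraph m n) : 0 < #|G| ->
  exists2 x, x \in G & #|H| * #|C G| <= #|G| * #|copies_containing G x|.
Proof.
move=> G_gt0; pose F x := #|copies_containing G x|.
have [x xG Fmax] := eq_bigmax_cond F G_gt0.
exists x => //; rewrite -sum_card_copies_containing -sum_nat_const.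
apply: leq_sum => y yG; by have := leq_bigmax_cond (F := F) _ yG; rewrite Fmax.
Qed.

Lemma card_le_zext (G : sgraph m n) : C G = set0 -> #|G| <= z.
Proof.
move=> noC; apply: (leq_bigmax_cond (P := fun G => ~~ has_signed_copy H G)).
by rewrite /has_signed_copy noC eqxx.
Qed.

Lemma signed_copies_neq0 (G : sgraph m n) : z < #|G| -> C G != set0.
Proof. by apply: contraTneq => /card_le_zext; rewrite leqNgt. Qed.

Lemma card_sub_zext_le_copies (G : sgraph m n) :
  0 < #|H| -> #|G| - z <= #|C G|.
Proof.
move=> H_gt0; move: {2}#|G| (erefl #|G|) => k; elim: k G => [|k IHk] G cardG.
  by rewrite cardG.
have [|zG] := leqP #|G| z; first by rewrite -subn_eq0 => /eqP->.
have /set0Pn[c copy_c] := signed_copies_neq0 zG.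
have /card_gt0P[x xc] : 0 < #|c.2| by rewrite (card_signed_copy copy_c).
have xG : x \in G := subsetP (signed_copy_sub copy_c) x xc.
have cardGx : #|G :\ x| = k by move: cardG; rewrite (cardsD1 x) xG => -[].
have : 0 < #|copies_containing G x|.
  by apply/card_gt0P; exists c; rewrite in_copies_containing copy_c.
by have := IHk _ cardGx; rewrite -(card_copies_setD1 G x); lia.
Qed.

Lemma card_gt0_of_zext (G : sgraph m n) : 0 < z -> z < #|G| -> 0 < #|H|.
Proof.
move=> z_gt0 zG; rewrite lt0n; apply: contraTneq z_gt0 => H0.
(* An edgeless copy found in G lies in every graph, so z is a max over no graph. *)
have /set0Pn[c copy_c] := signed_copies_neq0 zG.
have c0 : c.2 = set0 by apply/eqP; rewrite -cards_eq0 (card_signed_copy copy_c) H0.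
rewrite /zext big_pred0 // => G'; apply/negbTE; rewrite negbK.
move: copy_c; rewrite in_signed_copies => /andP[copyT_c _].
by apply/set0Pn; exists c; rewrite in_signed_copies copyT_c c0 sub0set.
Qed.

Lemma card_le_zextS (G : sgraph m n) : z < #|G| -> #|H| <= z.+1.
Proof.
move=> zG; have [B sBG cardB] := subset_of_card zG.
have /set0Pn[c copy_c] : C B != set0 by apply: signed_copies_neq0; rewrite cardB.
by rewrite -cardB -(card_signed_copy copy_c) subset_leq_card ?signed_copy_sub.
Qed.

Lemma exists_edge_copies_setD1_ffact (G : sgraph m n) : #|H| < #|G| ->
  exists2 x, x \in G & #|C (G :\ x)| * #|G| ^_ #|H| <= #|C G| * #|G|.-1 ^_ #|H|.
Proof.
move=> H_lt; have G_gt0 : 0 < #|G| by apply: leq_ltn_trans H_lt.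
have [x xG many] := exists_edge_in_many_copies G_gt0.
exists x => //; have partX := card_copies_setD1 G x.
set e := #|G| in many partX *; set h := #|H| in H_lt many *.
set X := #|C G| in many partX *; set Xx := #|C _| in partX *.
have ltn0 : 0 < e - h by rewrite subn_gt0.
have XxX : Xx * e <= X * (e - h) by nia.
rewrite -(leq_pmul2r ltn0) -mulnA -ffactnSr ffactnS mulnCA mulnC.
by rewrite mulnAC [X * _ * _]mulnAC leq_mul2r XxX orbT.
Qed.

Lemma zext_ffact_le_card_copies (G : sgraph m n) :
  0 < #|H| -> #|H| <= 2 * z -> 2 * z <= #|G| ->
  z * #|G| ^_ #|H| <= #|C G| * (2 * z) ^_ #|H|.
Proof.
move=> H_gt0 H_le; move Ed: (#|G| - 2 * z) => d.
elim: d G Ed => [|d IHd] G Ed G_ge.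
  have cardG : #|G| = 2 * z by lia.
  rewrite cardG leq_mul2r; have := card_sub_zext_le_copies G H_gt0.
  by rewrite cardG => ?; apply/orP; right; lia.
have [|x xG step] := @exists_edge_copies_setD1_ffact G; first by lia.
have cardGx : #|G :\ x| = #|G|.-1 by rewrite (cardsD1 x G) xG.
have IHx : z * #|G|.-1 ^_ #|H| <= #|C (G :\ x)| * (2 * z) ^_ #|H|.
  by rewrite -cardGx; apply: IHd; rewrite cardGx; lia.
have ffact_gt0 : 0 < #|G|.-1 ^_ #|H| by rewrite ffact_gt0; lia.
rewrite -(leq_pmul2r ffact_gt0) mulnAC.
apply: leq_trans (_ : _ <= #|C (G :\ x)| * (2 * z) ^_ #|H| * #|G| ^_ #|H|) _.
  by rewrite leq_mul2r IHx orbT.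
by rewrite mulnAC [X in _ <= X]mulnAC leq_mul2r step orbT.
Qed.

End SignedCopies.

Local Open Scope ring_scope.

Lemma ler_pow_ffact (R : realFieldType) (c : R) (N e j : nat) :
  1 <= c -> c * N%:R <= e%:R -> c ^+ j * (N ^_ j)%:R <= (e ^_ j)%:R.
Proof.
move=> c_ge1 cNe; have c_ge0 : 0 <= c := le_trans ler01 c_ge1.
elim: j => [|j IHj]; first by rewrite expr0 mul1r !ffactn0.
rewrite !ffactnSr !natrM exprSr mulrACA ler_pM ?mulr_ge0 ?exprn_ge0 //.
have [jN|/ltnW] := leqP j N; last by rewrite -subn_eq0 => /eqP->; rewrite mulr0.
have Ne : (N <= e)%N by rewrite -(ler_nat R); apply: le_trans cNe; rewrite ler_peMl.
rewrite !natrB ?(leq_trans jN) //; have : j%:R <= c * j%:R by rewrite ler_peMl.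
by lra.
Qed.

Theorem lemma4p1 (R : realFieldType) (K : R) (a b m n : nat)
  (H : sgraph a b) (G : sgraph m n) :
  4 <= K ->
  K * (zext m n H)%:R <= (#|G|)%:R ->
  (K / 2) ^+ #|H| * (zext m n H)%:R <= (#|signed_copies H G|)%:R.
Proof.
move=> K_ge4 KzG; set z := zext m n H in KzG *.
have [->|z_gt0] := posnP z; first by rewrite mulr0.
have zG : (2 * z <= #|G|)%N.
  rewrite -(ler_nat R) natrM; have : 0 <= z%:R :> R by [].
  by nra.
have zG' : (z < #|G|)%N by lia.
have H_gt0 := card_gt0_of_zext z_gt0 zG'.
have H_le : (#|H| <= 2 * z)%N by have := card_le_zextS zG'; lia.
have := zext_ffact_le_card_copies H_gt0 H_le zG.
rewrite -(ler_nat R) !natrM => key.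
have ffact_gt0 : 0 < ((2 * z) ^_ #|H|)%:R :> R by rewrite ltr0n ffact_gt0.
rewrite -(ler_pM2r ffact_gt0) (le_trans _ key) // mulrAC mulrC ler_pM2l ?ltr0n //.
by apply: (ler_pow_ffact (c := K / 2)); rewrite ?natrM; lra.
Qed.
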